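(* Let $a_1,\dots,a_n\in\mathbb{Z}_{\ge0}$ with $a_1+\cdots+a_n=A$, let $t_1,\dots,t_n\in\mathbb{Z}_{\ge0}$ with $t_1+\cdots+t_n=T$, let $B\in\mathbb{Z}$, and let $p_1,\dots,p_n\in\mathbb{Z}/2$. Then $$\sum_{\substack{f_1+\cdots+f_n=B\\ f_i\equiv p_i \ (\mathrm{mod}\ 2)}}\ \prod_{i=1}^n\binom{2a_i}{f_i}(f_i)_{t_i}=\sum_{\substack{f_1+\cdots+f_n=2A-B+T\\ f_i\equiv p_i+t_i\ (\mathrm{mod}\ 2)}}\ \prod_{i=1}^n\binom{2a_i}{f_i}(f_i)_{t_i},$$ where both sums run over $(f_1,\dots,f_n)\in\mathbb{Z}^n$.
   Context: $\binom{m}{f}$ is the usual binomial coefficient, zero when $f<0$ or $f>m$. $(f)_t:=f(f-1)\cdots(f-t+1)$ is the falling factorial (Pochhammer symbol), with $(f)_0=1$. *)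

From HB Require Import structures.
From mathcomp Require Import all_boot all_order all_algebra.
Set Implicit Arguments. Unset Strict Implicit. Unset Printing Implicit Defensive.
Import Order.TTheory GRing.Theory Num.Theory.
Local Open Scope ring_scope.

(* Binomial coefficient binom(m, f) for m : nat, f : int; zero when f < 0
   (and, via 'C, when f > m). *)
Definition binz (m : nat) (f : int) : int :=
  match f with Posz k => ('C(m, k))%:Z | Negz _ => 0 end.

Definition fallz (f : int) (t : nat) : int :=
  \prod_(j < t) (f - (j : nat)%:Z).

(* Parity of an integer, as an element of Z/2 = bool. *)
Definition parz (f : int) : bool := odd `|f|%N.

(* Sum of F over all f in the integer box [-N, N]^n.  Used to express a sum
   over f in Z^n whose summand vanishes outside this box. *)
Definition boxsum (n N : nat) (F : ('I_n -> int) -> int) : int :=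
  \sum_(k : {ffun 'I_n -> 'I_(N + N).+1}) F (fun i => (k i : nat)%:Z - N%:Z).

From HB Require Import structures.
From mathcomp Require Import all_boot all_order all_algebra zify ring.
From Stdlib Require Import FunctionalExtensionality.
Import Order.TTheory GRing.Theory Num.Theory.
Local Open Scope ring_scope.
Set Implicit Arguments. Unset Strict Implicit.

(* For each i, the map f |-> 2 a_i + t_i - f is an involution of [t_i, 2 a_i]
   that preserves binom(2 a_i, f) (f)_{t_i}, since
   binom(m, f) (f)_t = (m)_t binom(m - t, f - t) and binom(m - t, .) is
   symmetric.  Outside [t_i, 2 a_i] the factor vanishes, so reflecting every
   coordinate inside that interval and fixing it elsewhere is an involution of
   Z^n (and of the summation box) which preserves the summand, shifts each
   parity by t_i (as 2 a_i is even) and sends the constraint sum = B to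
   sum = 2A + T - B. *)

Lemma fallzE (m t : nat) : fallz m%:Z t = (m ^_ t)%:Z.
Proof.
elim: t => [|t IH]; first by rewrite /fallz big_ord0 ffactn0.
rewrite /fallz big_ord_recr /= -/(fallz _ t) IH ffactnSr PoszM.
have [le_tm | lt_mt] := leqP t m; first by rewrite subzn.
by rewrite ffact_small ?mul0r.
Qed.

Lemma mul_bin_ffact (n m t : nat) : (t <= m <= n)%N ->
  ('C(n, m) * m ^_ t = n ^_ t * 'C(n - t, m - t))%N.
Proof.
case/andP=> le_tm le_mn.
have fact_gt0 : (0 < (m - t)`! * (n - m)`!)%N by rewrite muln_gt0 !fact_gt0.
apply/eqP; rewrite -(eqn_pmul2r fact_gt0); apply/eqP.
have lhsE : ('C(n, m) * m ^_ t * ((m - t)`! * (n - m)`!) = n`!)%N.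
  by rewrite -(bin_fact le_mn) -(ffact_fact le_tm); ring.
have rhsE : (n ^_ t * 'C(n - t, m - t) * ((m - t)`! * (n - m)`!) = n`!)%N.
  have le_tn : (t <= n)%N by lia.
  have le_mt_nt : (m - t <= n - t)%N by lia.
  have -> : (n - m = n - t - (m - t))%N by lia.
  by rewrite -(ffact_fact le_tn) -(bin_fact le_mt_nt); ring.
by rewrite lhsE rhsE.
Qed.

Lemma mul_bin_ffact_refl (n m t : nat) : (t <= m <= n)%N ->
  ('C(n, m) * m ^_ t = 'C(n, n + t - m) * (n + t - m) ^_ t)%N.
Proof.
move=> tmn; rewrite !mul_bin_ffact //; last by lia.
have -> : (n + t - m - t = n - t - (m - t))%N by lia.
by rewrite bin_sub //; lia.
Qed.

Section Mirror.
Variables m t : nat.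

Definition mirror_dom (x : int) : bool := t%:Z <= x <= m%:Z.

Definition mirror (x : int) : int := if mirror_dom x then (m + t)%:Z - x else x.

Lemma mirror_dom_mirror x : mirror_dom x -> mirror_dom (mirror x).
Proof.
rewrite /mirror /mirror_dom => dom_x; rewrite dom_x.
by case/andP: dom_x => le_tx le_xm; apply/andP; split; lia.
Qed.

Lemma mirrorK : involutive mirror.
Proof.
move=> x; rewrite {2}/mirror; case: ifP => [dom_x | dom'_x]; last by rewrite /mirror dom'_x.
by have := mirror_dom_mirror dom_x; rewrite /mirror dom_x => ->; ring.
Qed.

Lemma mirror_bounded (N : nat) x : (m <= N)%N -> - N%:Z <= x <= N%:Z ->
  - N%:Z <= mirror x <= N%:Z.
Proof.
move=> le_mN /andP[lo_x hi_x]; rewrite /mirror /mirror_dom.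
by case: ifP => [/andP[le_tx le_xm] | _]; apply/andP; split; lia.
Qed.

Lemma binz_fallz_out x : ~~ mirror_dom x -> binz m x * fallz x t = 0.
Proof.
rewrite /mirror_dom; case: x => [k|k] dom'_k; last by rewrite mul0r.
rewrite /= fallzE; have [le_km | lt_mk] := leqP k m; last by rewrite bin_small.
by rewrite ffact_small ?mulr0 //; lia.
Qed.

Lemma binz_fallz_mirror x : binz m (mirror x) * fallz (mirror x) t = binz m x * fallz x t.
Proof.
rewrite /mirror /mirror_dom; case: ifP => //; case: x => [k|k] //= /andP[le_tk le_km].
rewrite subzn; last by lia.
rewrite /binz !fallzE -!PoszM; congr Posz; apply/esym/mul_bin_ffact_refl; lia.
Qed.

Lemma parz_mirror x : ~~ odd m -> mirror_dom x -> parz (mirror x) = parz x (+) odd t.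
Proof.
rewrite /mirror => even_m dom_x; rewrite dom_x.
case: x dom_x => [k|k] /andP[le_tk le_km] //; rewrite subzn; last by lia.
rewrite /parz /= oddB; last by lia.
by rewrite oddD (negbTE even_m) addbC.
Qed.

End Mirror.

Section BoxReindex.
Variables (n N : nat) (r : 'I_n -> int -> int).
Hypotheses (rK : forall i, involutive (r i))
  (r_bounded : forall i x, - N%:Z <= x <= N%:Z -> - N%:Z <= r i x <= N%:Z).

Let box_point (k : {ffun 'I_n -> 'I_(N + N).+1}) i : int := (k i : nat)%:Z - N%:Z.

Let box_map (k : {ffun 'I_n -> 'I_(N + N).+1}) : {ffun 'I_n -> 'I_(N + N).+1} :=
  [ffun i => inord (absz (r i (box_point k i) + N%:Z))].

Let box_mapE k i : box_point (box_map k) i = r i (box_point k i).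
Proof.
have /andP[lo hi] : - N%:Z <= r i (box_point k i) <= N%:Z.
  by apply: r_bounded; have := ltn_ord (k i); rewrite /box_point; lia.
rewrite /box_point ffunE inordK; last by lia.
by rewrite abszE ger0_norm ?addrK //; lia.
Qed.

Let box_mapK : involutive box_map.
Proof.
move=> k; apply/ffunP => i; apply/val_inj => /=.
have : box_point (box_map (box_map k)) i = box_point k i by rewrite !box_mapE rK.
by rewrite /box_point; lia.
Qed.

Lemma boxsum_reindex (F : ('I_n -> int) -> int) :
  @boxsum n N F = @boxsum n N (fun f => F (fun i => r i (f i))).
Proof.
rewrite /boxsum (reindex_inj (inv_inj box_mapK)); apply: eq_bigr => k _.
by congr F; apply: functional_extensionality => i; rewrite -box_mapE.
Qed.

End BoxReindex.

Section MirrorSummand.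
Variables (n : nat) (a t : 'I_n -> nat) (A T : nat).
Hypotheses (hA : (\sum_(i < n) a i)%N = A) (hT : (\sum_(i < n) t i)%N = T).

Let mir i := mirror (2 * a i) (t i).

Lemma sum_mirror (f : 'I_n -> int) : (forall i, mirror_dom (2 * a i) (t i) (f i)) ->
  \sum_(i < n) mir i (f i) = (2 * A)%:Z + T%:Z - \sum_(i < n) f i.
Proof.
move=> dom_f; rewrite (eq_bigr (fun i => (2 * a i + t i)%N%:Z - f i)); last first.
  by move=> i _; rewrite /mir /mirror dom_f.
rewrite sumrB -PoszD -hA -hT big_distrr -big_split /=.
by rewrite (big_morph Posz PoszD (erefl _)).
Qed.

Lemma summand_mirror (B : int) (p : 'I_n -> bool) (f : 'I_n -> int) :
  (if (\sum_(i < n) mir i (f i) == (2 * A)%:Z - B + T%:Z)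
       && [forall i, parz (mir i (f i)) == (p i (+) odd (t i))]
   then \prod_(i < n) (binz (2 * a i) (mir i (f i)) * fallz (mir i (f i)) (t i)) else 0)
  = (if (\sum_(i < n) f i == B) && [forall i, parz (f i) == p i]
     then \prod_(i < n) (binz (2 * a i) (f i) * fallz (f i) (t i)) else 0).
Proof.
rewrite /mir; under [\prod_(i < n) _]eq_bigr => i _ do rewrite binz_fallz_mirror.
have [dom_f | /forallPn[i dom'_fi]] := boolP [forall i, mirror_dom (2 * a i) (t i) (f i)].
  have {}dom_f := forallP dom_f.
  rewrite sum_mirror //; congr (if _ && _ then _ else _).
    by apply/eqP/eqP; lia.
  apply: eq_forallb => i; rewrite parz_mirror ?oddM //.
  by case: (parz (f i)); case: (p i); case: (odd (t i)).
rewrite [\prod_(j < n) _](bigD1 i) //= binz_fallz_out // mul0r.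
by case: ifP; case: ifP.
Qed.

End MirrorSummand.

Theorem lemmaA1 (n : nat) (a t : 'I_n -> nat) (A T : nat) (B : int)
    (p : 'I_n -> bool)
    (hA : (\sum_(i < n) a i)%N = A) (hT : (\sum_(i < n) t i)%N = T) :
  @boxsum n (2 * A)%N
    (fun f => if (\sum_(i < n) f i == B) && [forall i, parz (f i) == p i]
              then \prod_(i < n) (binz (2 * a i)%N (f i) * fallz (f i) (t i))
              else 0)
  =
  @boxsum n (2 * A)%N
    (fun f => if (\sum_(i < n) f i == (2 * A)%:Z - B + T%:Z)
                 && [forall i, parz (f i) == (p i (+) odd (t i))]
              then \prod_(i < n) (binz (2 * a i)%N (f i) * fallz (f i) (t i))
              else 0).
Proof.
have le_a_A i : (2 * a i <= 2 * A)%N by rewrite leq_mul2l -hA (bigD1 i) //= leq_addr //.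
rewrite [RHS](@boxsum_reindex n (2 * A) (fun i => mirror (2 * a i) (t i))).
- by apply: eq_bigr => k _; rewrite summand_mirror.
- by move=> i; apply: mirrorK.
- by move=> i x; apply: mirror_bounded.
Qed.
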